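(* Let $\{G^k\}_{k\ge0}$ be a $B$-strongly connected sequence of digraphs on $V=\{1,\dots,I\}$ and let each $\mathbf{A}^k=(a_{ij}^k)$ be compliant with $G^k$ and column stochastic (constant $\kappa>0$). For arbitrary perturbations $\boldsymbol\varepsilon_i^k\in\mathbb{R}^m$ and initial $\mathbf{x}^0=(\mathbf{x}_{(i)}^0)_{i=1}^I$, consider the perturbed condensed push-sum protocol: $\phi_{(i)}^0=1$ and, for all $i$ and $k\ge0$, $$\phi_{(i)}^{k+1}=\sum_{j=1}^Ia_{ij}^k\phi_{(j)}^k,\qquad \mathbf{x}_{(i)}^{k+1}=\frac{1}{\phi_{(i)}^{k+1}}\sum_{j=1}^Ia_{ij}^k\phi_{(j)}^k\mathbf{x}_{(j)}^k+\boldsymbol\varepsilon_i^k.$$ Then: (a) $\phi_{lb}\triangleq\inf_k\min_i\phi_{(i)}^k\ge\kappa^{2(I-1)B}$ and $\phi_{ub}\triangleq\sup_k\max_i\phi_{(i)}^k\le I-\kappa^{2(I-1)B}$; (b) for all $k\ge0$ and $i=1,\dots,I$, $$\Big\|\mathbf{x}_{(i)}^k-\frac1I\sum_{j=1}^I\phi_{(j)}^k\mathbf{x}_{(j)}^k\Big\|\le c\Big(\rho^k\|\mathbf{x}^0\|+\sum_{t=0}^{k-1}\rho^{k-1-t}\|\boldsymbol\varepsilon^t\|\Big),$$ where $\boldsymbol\varepsilon^t=(\boldsymbol\varepsilon_i^t)_{i=1}^I$, $\tilde\kappa\triangleq\kappa\,\phi_{lb}/\phi_{ub}$, $\rho\triangleq(1-\tilde\kappa^{(I-1)B})^{1/((I-1)B)}\in(0,1)$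 and $c\triangleq\frac{2I}{\rho}\cdot\frac{2(1+\tilde\kappa^{-(I-1)B})}{1-\tilde\kappa^{(I-1)B}}$.
   Context: A digraph at time $k$ is $G^k=(V,E^k)$ with edge $(j,i)\in E^k$ meaning $j$ can send to $i$. The sequence is $B$-strongly connected if there is an integer $B>0$ such that for every $k\ge0$ the digraph with edge set $\bigcup_{t=k}^{k+B-1}E^t$ is strongly connected. $\mathbf{A}^k$ is compliant with $G^k$ (constant $\kappa>0$) if $a_{ij}^k=0$ whenever $j\ne i$ and $(j,i)\notin E^k$, $a_{ij}^k\ge\kappa$ whenever $(j,i)\in E^k$, and $a_{ii}^k\ge\kappa$ for all $i$; it is column stochastic if $\mathbf{1}^T\mathbf{A}^k=\mathbf{1}^T$ (nonnegative entries). $\|\mathbf{x}^0\|$ is the Euclidean norm of the stacked vector. *)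

From Stdlib Require Export Reals Relations.
Open Scope R_scope.

Fixpoint rsum (n : nat) (f : nat -> R) : R :=
  match n with
  | O => 0
  | S n' => rsum n' f + f n'
  end.

Definition vnorm (m : nat) (v : nat -> R) : R :=
  sqrt (rsum m (fun l => (v l)^2)).

(* Euclidean norm of the stacked vector (y_(i))_{i<I}, each y_(i) in R^m *)
Definition snorm (I m : nat) (y : nat -> nat -> R) : R :=
  sqrt (rsum I (fun i => rsum m (fun l => (y i l)^2))).

(* Digraph sequence on V = {0,..,I-1}: E k j i means (j,i) in E^k,
   i.e. j can send to i at time k. *)
Definition union_edge (E : nat -> nat -> nat -> Prop) (I B k : nat) (j i : nat) : Prop :=
  (j < I)%nat /\ (i < I)%nat /\ exists t, (k <= t < k + B)%nat /\ E t j i.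

Definition strongly_connected_union (E : nat -> nat -> nat -> Prop) (I B k : nat) : Prop :=
  forall i j, (i < I)%nat -> (j < I)%nat -> clos_refl_trans nat (union_edge E I B k) i j.

Definition B_strongly_connected (E : nat -> nat -> nat -> Prop) (I B : nat) : Prop :=
  (0 < B)%nat /\ forall k, strongly_connected_union E I B k.

(* A k i j = a_ij^k *)
Definition compliant (E : nat -> nat -> nat -> Prop) (A : nat -> nat -> nat -> R)
  (I : nat) (kappa : R) : Prop :=
  forall k i j, (i < I)%nat -> (j < I)%nat ->
    (j <> i -> ~ E k j i -> A k i j = 0) /\
    (E k j i -> A k i j >= kappa) /\
    A k i i >= kappa.

Definition column_stochastic (A : nat -> nat -> nat -> R) (I : nat) : Prop :=
  forall k, (forall i j, (i < I)%nat -> (j < I)%nat -> 0 <= A k i j) /\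
            (forall j, (j < I)%nat -> rsum I (fun i => A k i j) = 1).

Definition is_inf (S : R -> Prop) (m : R) : Prop :=
  (forall y, S y -> m <= y) /\ (forall b, (forall y, S y -> b <= y) -> b <= m).

Definition is_sup (S : R -> Prop) (m : R) : Prop :=
  (forall y, S y -> y <= m) /\ (forall b, (forall y, S y -> y <= b) -> m <= b).

Definition phi_values (I : nat) (phi : nat -> nat -> R) (y : R) : Prop :=
  exists k i, (i < I)%nat /\ y = phi k i.

(** The push-sum weights [phi] evolve by column-stochastic matrices, so their
    total mass stays [I]; some node always has weight at least [1], and strong
    connectivity over windows of length [B] lets it pass a [kappa ^ ((I - 1) B)]
    share of it to every node, which keeps all weights in
    [[kappa ^ (2 N), I - kappa ^ (2 N)]] with [N = (I - 1) B].  Dividing by the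
    weights turns the estimate recursion into a row-stochastic averaging
    [x(t+1) = W(t) x(t) + eps(t)] whose entries on the edges and the diagonal are
    at least [kt = kappa phi_lb / phi_ub].  For such an averaging, the spread
    [max - min] of every scalar coordinate shrinks by the factor [1 - kt ^ N] over
    each window of length [N], up to the perturbations injected meanwhile; the
    coordinate obtained by pairing with the disagreement vector itself turns this
    spread bound into the norm bound of (b). *)

From Stdlib Require Import Reals Lra Lia Classical.
Open Scope R_scope.

(** * Finite sums, norms and elementary inequalities *)

Lemma pow_le_pow_of_le1 r a b : 0 <= r <= 1 -> (a <= b)%nat -> r ^ b <= r ^ a.
Proof.
  intros Hr Hab. replace b with (a + (b - a))%nat by lia. rewrite pow_add.
  assert (0 <= r ^ a) by (apply pow_le; lra).
  assert (r ^ (b - a) <= 1) by (rewrite <- (pow1 (b - a)); apply pow_incr; lra).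
  nra.
Qed.

Lemma Rabs_le_between a b : Rabs a <= b -> - b <= a <= b.
Proof. unfold Rabs. destruct (Rcase_abs a); lra. Qed.

Lemma rsum_ext n f g : (forall i, (i < n)%nat -> f i = g i) -> rsum n f = rsum n g.
Proof.
  induction n as [|n IH]; intros Hfg; simpl; [reflexivity|].
  rewrite IH, Hfg; auto; intros; apply Hfg; lia.
Qed.

Lemma rsum_le n f g : (forall i, (i < n)%nat -> f i <= g i) -> rsum n f <= rsum n g.
Proof.
  induction n as [|n IH]; intros Hfg; simpl; [lra|].
  assert (rsum n f <= rsum n g) by (apply IH; intros; apply Hfg; lia).
  assert (f n <= g n) by (apply Hfg; lia). lra.
Qed.

Lemma rsum_add n f g : rsum n (fun i => f i + g i) = rsum n f + rsum n g.
Proof. induction n as [|n IH]; simpl; [lra|]. rewrite IH. ring. Qed.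

Lemma rsum_scal n c f : rsum n (fun i => c * f i) = c * rsum n f.
Proof. induction n as [|n IH]; simpl; [ring|]. rewrite IH. ring. Qed.

Lemma rsum_const n c : rsum n (fun _ => c) = INR n * c.
Proof. induction n as [|n IH]; simpl rsum; [simpl; ring|]. rewrite IH, S_INR. ring. Qed.

Lemma rsum_nonneg n f : (forall i, (i < n)%nat -> 0 <= f i) -> 0 <= rsum n f.
Proof. intros Hf. rewrite <- (Rmult_0_r (INR n)), <- rsum_const. now apply rsum_le. Qed.

Lemma rsum_term_le n f i : (forall i, (i < n)%nat -> 0 <= f i) -> (i < n)%nat ->
  f i <= rsum n f.
Proof.
  induction n as [|n IH]; intros Hf Hi; simpl; [lia|].
  destruct (Nat.eq_dec i n) as [->|Hin].
  - assert (0 <= rsum n f) by (apply rsum_nonneg; intros; apply Hf; lia). lra.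
  - assert (f i <= rsum n f) by (apply IH; [intros; apply Hf|]; lia).
    assert (0 <= f n) by (apply Hf; lia). lra.
Qed.

Lemma rsum_two_terms_le n f i j : (forall i, (i < n)%nat -> 0 <= f i) ->
  (i < n)%nat -> (j < n)%nat -> i <> j -> f i + f j <= rsum n f.
Proof.
  induction n as [|n IH]; intros Hf Hi Hj Hij; simpl; [lia|].
  assert (Hf' : forall u, (u < n)%nat -> 0 <= f u) by (intros; apply Hf; lia).
  destruct (Nat.eq_dec i n) as [->|Hin]; [|destruct (Nat.eq_dec j n) as [->|Hjn]].
  - assert (f j <= rsum n f) by (apply rsum_term_le; auto; lia). lra.
  - assert (f i <= rsum n f) by (apply rsum_term_le; auto; lia). lra.
  - assert (f i + f j <= rsum n f) by (apply IH; auto; lia).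
    assert (0 <= f n) by (apply Hf; lia). lra.
Qed.

Lemma rsum_comm n m f :
  rsum n (fun i => rsum m (fun j => f i j)) = rsum m (fun j => rsum n (fun i => f i j)).
Proof.
  induction n as [|n IH]; simpl.
  - rewrite rsum_const. ring.
  - rewrite IH, <- rsum_add. reflexivity.
Qed.

Lemma rsum_split a b f : rsum (a + b) f = rsum a f + rsum b (fun u => f (a + u)%nat).
Proof.
  induction b as [|b IH]; simpl; [rewrite Nat.add_0_r; ring|].
  rewrite Nat.add_succ_r. simpl. rewrite IH. ring.
Qed.

Lemma rsum_ge_exists_ge n f c : (0 < n)%nat -> INR n * c <= rsum n f ->
  exists i, (i < n)%nat /\ c <= f i.
Proof.
  intros Hn Hsum. apply NNPP. intros Hnone.
  assert (Hlt : forall i, (i < n)%nat -> f i < c)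
    by (intros i Hi; apply Rnot_le_lt; intros Hci; apply Hnone; eauto).
  assert (Hsum_lt : rsum n f < rsum n (fun _ => c)).
  { destruct n as [|n]; [lia|]. simpl.
    assert (rsum n f <= rsum n (fun _ => c)) by (apply rsum_le; intros; apply Rlt_le, Hlt; lia).
    assert (f n < c) by (apply Hlt; lia). lra. }
  rewrite rsum_const in Hsum_lt. lra.
Qed.

Lemma rsum_affine n p y a c : rsum n p = 1 ->
  rsum n (fun j => p j * (a * y j + c)) = a * rsum n (fun j => p j * y j) + c.
Proof.
  intros Hp. rewrite (rsum_ext n _ (fun j => a * (p j * y j) + c * p j)) by (intros; ring).
  rewrite rsum_add, !rsum_scal, Hp. ring.
Qed.

Lemma convex_comb_between n p y lo hi :
  (forall j, (j < n)%nat -> 0 <= p j) -> rsum n p = 1 ->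
  (forall j, (j < n)%nat -> lo <= y j <= hi) ->
  lo <= rsum n (fun j => p j * y j) <= hi.
Proof.
  intros Hp0 Hp1 Hy.
  replace lo with (lo * rsum n p) by (rewrite Hp1; ring).
  replace hi with (hi * rsum n p) by (rewrite Hp1; ring).
  rewrite <- !rsum_scal.
  split; apply rsum_le; intros j Hj; specialize (Hy j Hj); specialize (Hp0 j Hj); nra.
Qed.

Lemma rsum_mul_sq_le m a b :
  (rsum m (fun l => a l * b l)) ^ 2 <= rsum m (fun l => a l ^ 2) * rsum m (fun l => b l ^ 2).
Proof.
  set (Saa := rsum m (fun l => a l ^ 2)). set (Sbb := rsum m (fun l => b l ^ 2)).
  set (Sab := rsum m (fun l => a l * b l)).
  assert (Hquad : forall t, 0 <= Saa * t ^ 2 + 2 * Sab * t + Sbb).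
  { intros t. replace (Saa * t ^ 2 + 2 * Sab * t + Sbb) with (rsum m (fun l => (a l * t + b l) ^ 2)).
    - apply rsum_nonneg. intros. apply pow2_ge_0.
    - unfold Saa, Sab, Sbb. rewrite Rmult_comm, <- (Rmult_comm t), <- !rsum_scal, <- !rsum_add.
      apply rsum_ext. intros. ring. }
  assert (HSaa : 0 <= Saa) by (apply rsum_nonneg; intros; apply pow2_ge_0).
  destruct (Req_dec Saa 0) as [HSaa0|HSaa0].
  - (* a linear function bounded below is constant *)
    destruct (Req_dec Sab 0) as [->|Hab]; [rewrite HSaa0; lra|].
    specialize (Hquad (- (Sbb + 1) / (2 * Sab))). rewrite HSaa0 in Hquad.
    replace (0 * (- (Sbb + 1) / (2 * Sab)) ^ 2 + 2 * Sab * (- (Sbb + 1) / (2 * Sab)) + Sbb)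
      with (-1) in Hquad by (field; auto). lra.
  - specialize (Hquad (- Sab / Saa)).
    replace (Saa * (- Sab / Saa) ^ 2 + 2 * Sab * (- Sab / Saa) + Sbb)
      with (Sbb - Sab ^ 2 / Saa) in Hquad by (field; auto).
    assert (0 < Saa) by lra.
    assert (Hprod : 0 <= Saa * (Sbb - Sab ^ 2 / Saa)) by (apply Rmult_le_pos; lra).
    replace (Saa * (Sbb - Sab ^ 2 / Saa)) with (Saa * Sbb - Sab ^ 2) in Hprod by (field; auto). lra.
Qed.

Lemma Rabs_rsum_mul_le m a b :
  Rabs (rsum m (fun l => a l * b l)) <= vnorm m a * vnorm m b.
Proof.
  unfold vnorm. rewrite <- sqrt_mult_alt by (apply rsum_nonneg; intros; apply pow2_ge_0).
  rewrite <- sqrt_Rsqr_abs, Rsqr_pow2. apply sqrt_le_1_alt, rsum_mul_sq_le.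
Qed.

Lemma vnorm_ext m v w : (forall l, (l < m)%nat -> v l = w l) -> vnorm m v = vnorm m w.
Proof. intros Hvw. unfold vnorm. f_equal. apply rsum_ext. intros l Hl. now rewrite Hvw. Qed.

Lemma vnorm_le_snorm I m y j : (j < I)%nat -> vnorm m (y j) <= snorm I m y.
Proof.
  intros Hj. apply sqrt_le_1_alt.
  apply (rsum_term_le I (fun i => rsum m (fun l => y i l ^ 2))); auto.
  intros. apply rsum_nonneg. intros. apply pow2_ge_0.
Qed.

Lemma inner_averaging_step I m (W : nat -> nat -> R) (v : nat -> R) (y y' e : nat -> nat -> R) j :
  (forall l, (l < m)%nat -> y' j l = rsum I (fun j' => W j j' * y j' l) + e j l) ->
  rsum m (fun l => v l * y' j l)
  = rsum I (fun j' => W j j' * rsum m (fun l => v l * y j' l)) + rsum m (fun l => v l * e j l).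
Proof.
  intros Hy'.
  rewrite (rsum_ext m _ (fun l => rsum I (fun j' => W j j' * (v l * y j' l)) + v l * e j l)).
  - rewrite rsum_add, rsum_comm. f_equal. apply rsum_ext. intros. apply rsum_scal.
  - intros l Hl. rewrite Hy', Rmult_plus_distr_l, <- rsum_scal by exact Hl.
    f_equal. apply rsum_ext. intros. ring.
Qed.

Lemma vnorm_sq_deviation I m (p : nat -> R) (y : nat -> nat -> R) i :
  let v l := y i l - rsum I (fun j => p j * y j l) in
  rsum m (fun l => v l * y i l) - rsum I (fun j => p j * rsum m (fun l => v l * y j l))
  = vnorm m v * vnorm m v.
Proof.
  intros v. unfold vnorm. rewrite sqrt_sqrt by (apply rsum_nonneg; intros; apply pow2_ge_0).
  rewrite (rsum_ext I _ (fun j => rsum m (fun l => p j * (v l * y j l)))) by (intros; symmetry; apply rsum_scal).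
  rewrite rsum_comm.
  rewrite (rsum_ext m (fun l => v l ^ 2) (fun l => v l * y i l + -1 * (v l * rsum I (fun j => p j * y j l))))
    by (intros; unfold v; ring).
  rewrite rsum_add, rsum_scal.
  rewrite (rsum_ext m (fun l => rsum I (fun j => p j * (v l * y j l)))
                      (fun l => v l * rsum I (fun j => p j * y j l)))
    by (intros; rewrite <- rsum_scal; apply rsum_ext; intros; ring).
  ring.
Qed.

(** * Propagation along a B-strongly connected sequence *)

Fixpoint count_below (n : nat) (p : nat -> bool) : nat :=
  match n with
  | O => O
  | S n' => (count_below n' p + if p n' then 1 else 0)%nat
  end.

Lemma count_below_le n p : (count_below n p <= n)%nat.
Proof. induction n as [|n IH]; simpl; [lia|]. destruct (p n); lia. Qed.

Lemma count_below_full n p : count_below n p = n -> forall i, (i < n)%nat -> p i = true.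
Proof.
  induction n as [|n IH]; simpl; intros Hn i Hi; [lia|].
  assert (Hle := count_below_le n p).
  destruct (p n) eqn:Hpn; [|lia].
  destruct (Nat.eq_dec i n) as [->|]; [assumption|]. apply IH; lia.
Qed.

Lemma count_below_mono n p q : (forall i, (i < n)%nat -> p i = true -> q i = true) ->
  (count_below n p <= count_below n q)%nat.
Proof.
  induction n as [|n IH]; simpl; intros Hpq; [lia|].
  assert (count_below n p <= count_below n q)%nat by (apply IH; auto).
  destruct (p n) eqn:Hp; [rewrite (Hpq n) by auto|destruct (q n)]; lia.
Qed.

Lemma count_below_mono_strict n p q i : (forall i, (i < n)%nat -> p i = true -> q i = true) ->
  (i < n)%nat -> p i = false -> q i = true -> (count_below n p < count_below n q)%nat.
Proof.
  induction n as [|n IH]; simpl; intros Hpq Hi Hpi Hqi; [lia|].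
  destruct (Nat.eq_dec i n) as [->|Hin].
  - assert (count_below n p <= count_below n q)%nat by (apply count_below_mono; auto).
    rewrite Hpi, Hqi. lia.
  - assert (count_below n p < count_below n q)%nat by (apply IH; auto; lia).
    destruct (p n) eqn:Hp; [rewrite (Hpq n) by auto|destruct (q n)]; lia.
Qed.

Lemma increasing_sets_fill n (p : nat -> nat -> bool) j :
  (forall s i, (i < n)%nat -> p s i = true -> p (S s) i = true) ->
  (forall s, (exists i, (i < n)%nat /\ p s i = false) ->
     exists i, (i < n)%nat /\ p s i = false /\ p (S s) i = true) ->
  (j < n)%nat -> p O j = true ->
  forall i, (i < n)%nat -> p (n - 1)%nat i = true.
Proof.
  intros Hmono Hgrow Hj Hpj.
  assert (Hcount : forall s, (S s <= count_below n (p s))%nat \/ forall i, (i < n)%nat -> p s i = true).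
  { induction s as [|s [IH|IH]].
    - left. assert (Hlt := count_below_mono_strict n (fun _ => false) (p O) j).
      assert (Hzero : count_below n (fun _ => false) = O) by (clear; induction n; simpl; lia).
      rewrite Hzero in Hlt. apply Hlt; auto; discriminate.
    - destruct (classic (exists i, (i < n)%nat /\ p s i = false)) as [Hnf|Hfull].
      + left. destruct (Hgrow s Hnf) as (i & Hi & Hpi & Hpi').
        assert (count_below n (p s) < count_below n (p (S s)))%nat
          by (apply (count_below_mono_strict n _ _ i); auto). lia.
      + right. intros i Hi. apply Hmono; auto.
        destruct (p s i) eqn:Hpi; [reflexivity|exfalso; eauto].
    - right. auto. }
  destruct (Hcount (n - 1)%nat) as [Hc|Hc]; [|exact Hc].
  apply count_below_full. assert (Hle := count_below_le n (p (n - 1)%nat)). lia.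
Qed.

Lemma clos_rt_exit_edge {T} (Rel : T -> T -> Prop) (P : T -> Prop) a b :
  clos_refl_trans T Rel a b -> P a -> ~ P b -> exists u w, Rel u w /\ P u /\ ~ P w.
Proof.
  induction 1 as [u w Huw| |u v w _ IHuv _ IHvw]; intros Ha Hb.
  - eauto.
  - contradiction.
  - destruct (classic (P v)); eauto.
Qed.

Section SuperSolution.

Variables (I B : nat) (E : nat -> nat -> nat -> Prop) (M : nat -> nat -> nat -> R)
  (d : R) (z : nat -> nat -> R) (k0 : nat).
Hypothesis Hd : 0 <= d.
Hypothesis HSC : forall t, strongly_connected_union E I B t.
Hypothesis HM0 : forall t i j, (i < I)%nat -> (j < I)%nat -> 0 <= M t i j.
Hypothesis HMdiag : forall t i, (i < I)%nat -> M t i i >= d.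
Hypothesis HMedge : forall t i j, (i < I)%nat -> (j < I)%nat -> E t j i -> M t i j >= d.
Hypothesis Hz0 : forall t i, (k0 <= t)%nat -> (i < I)%nat -> 0 <= z t i.
Hypothesis Hz : forall t i, (k0 <= t)%nat -> (i < I)%nat ->
  rsum I (fun j => M t i j * z t j) <= z (S t) i.

Lemma super_solution_term t i j : (k0 <= t)%nat -> (i < I)%nat -> (j < I)%nat ->
  M t i j * z t j <= z (S t) i.
Proof.
  intros Ht Hi Hj. eapply Rle_trans; [|apply Hz; auto].
  apply (rsum_term_le I (fun u => M t i u * z t u)); auto.
  intros. apply Rmult_le_pos; auto.
Qed.

Lemma super_solution_persist p t i : (k0 <= t)%nat -> (i < I)%nat -> d ^ p * z t i <= z (t + p)%nat i.
Proof.
  intros Ht Hi. induction p as [|p IH]; [rewrite Nat.add_0_r; simpl; lra|].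
  rewrite Nat.add_succ_r. simpl pow.
  assert (Hstep := super_solution_term (t + p) i i ltac:(lia) Hi Hi).
  assert (0 <= z (t + p)%nat i) by (apply Hz0; auto; lia).
  assert (d * z (t + p)%nat i <= M (t + p)%nat i i * z (t + p)%nat i)
    by (apply Rmult_le_compat_r; auto; apply Rge_le, HMdiag; auto).
  assert (d * (d ^ p * z t i) <= d * z (t + p)%nat i) by (apply Rmult_le_compat_l; auto). lra.
Qed.

Lemma super_solution_path t0 L t i j : (k0 <= t0 <= t)%nat -> (t < t0 + L)%nat ->
  (i < I)%nat -> (j < I)%nat -> E t j i -> d ^ L * z t0 j <= z (t0 + L)%nat i.
Proof.
  intros Ht Hlt Hi Hj He.
  assert (Hbefore := super_solution_persist (t - t0) t0 j ltac:(lia) Hj).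
  replace (t0 + (t - t0))%nat with t in Hbefore by lia.
  assert (Hedge := super_solution_term t i j ltac:(lia) Hi Hj).
  assert (Hafter := super_solution_persist (t0 + L - S t) (S t) i ltac:(lia) Hi).
  replace (S t + (t0 + L - S t))%nat with (t0 + L)%nat in Hafter by lia.
  replace L with (t0 + L - S t + (1 + (t - t0)))%nat at 1 by lia. rewrite !pow_add, pow_1.
  assert (0 <= d ^ (t - t0)) by (apply pow_le; auto).
  assert (0 <= d ^ (t0 + L - S t)) by (apply pow_le; auto).
  assert (0 <= z t0 j) by (apply Hz0; auto; lia).
  assert (0 <= z t j) by (apply Hz0; auto; lia).
  assert (d * z t j <= M t i j * z t j) by (apply Rmult_le_compat_r; auto; apply Rge_le, HMedge; auto).
  assert (d * (d ^ (t - t0) * z t0 j) <= d * z t j) by (apply Rmult_le_compat_l; auto).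
  assert (d ^ (t0 + L - S t) * (d * (d ^ (t - t0) * z t0 j)) <= d ^ (t0 + L - S t) * z (S t) i)
    by (apply Rmult_le_compat_l; lra).
  lra.
Qed.

(* The set of nodes that have received a [d]-fraction per step of [z k0 j] grows by
   at least one node per window of length [B], so it is everything after [I - 1] windows. *)
Lemma super_solution_spread i j : (i < I)%nat -> (j < I)%nat ->
  d ^ ((I - 1) * B) * z k0 j <= z (k0 + (I - 1) * B)%nat i.
Proof.
  intros Hi Hj.
  set (reached s u := if Rle_dec (d ^ (s * B) * z k0 j) (z (k0 + s * B)%nat u) then true else false).
  assert (Hreached : forall s u, reached s u = true <-> d ^ (s * B) * z k0 j <= z (k0 + s * B)%nat u).
  { intros s u. unfold reached. destruct (Rle_dec _ _); split; auto; discriminate. }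
  assert (Hmono : forall s u, (u < I)%nat -> reached s u = true -> reached (S s) u = true).
  { intros s u Hu Hsu. apply Hreached. apply Hreached in Hsu.
    replace (S s * B)%nat with (s * B + B)%nat by lia.
    replace (k0 + (s * B + B))%nat with (k0 + s * B + B)%nat by lia.
    rewrite pow_add. eapply Rle_trans; [|apply super_solution_persist; auto; lia].
    assert (0 <= d ^ B) by (apply pow_le; auto).
    rewrite (Rmult_comm (d ^ (s * B))), Rmult_assoc. apply Rmult_le_compat_l; auto. }
  assert (Hstart : forall s, reached s j = true).
  { induction s as [|s IH]; auto.
    apply Hreached. rewrite Nat.mul_0_l, Nat.add_0_r. simpl. lra. }
  apply Hreached. apply (increasing_sets_fill I reached j); auto.
  intros s (u & Hu & Hsu).
  destruct (clos_rt_exit_edge (union_edge E I B (k0 + s * B)) (fun v => (v < I)%nat /\ reached s v = true)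
              j u (HSC _ j u Hj Hu)) as (v & w & (Hv & Hw & t & Ht & He) & [_ Hsv] & Hsw).
  - auto.
  - rewrite Hsu. intros [_ ?]. discriminate.
  - exists w. split; [auto|]. split.
    + destruct (reached s w) eqn:?; [exfalso; auto|reflexivity].
    + apply Hreached. apply Hreached in Hsv.
      replace (k0 + S s * B)%nat with (k0 + s * B + B)%nat by lia.
      replace (S s * B)%nat with (B + s * B)%nat by lia. rewrite pow_add, Rmult_assoc.
      eapply Rle_trans; [|apply (super_solution_path _ _ t w v); auto; lia].
      apply Rmult_le_compat_l; [apply pow_le; auto|exact Hsv].
Qed.

End SuperSolution.

(** * Perturbed row-stochastic averaging *)

Definition spread_le (n : nat) (y : nat -> R) (w : R) : Prop :=
  exists hi lo, hi - lo <= w /\ forall j, (j < n)%nat -> lo <= y j <= hi.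

Lemma spread_le_weaken n y w w' : spread_le n y w -> w <= w' -> spread_le n y w'.
Proof. intros (hi & lo & Hw & Hy) Hww'. exists hi, lo. split; [lra|exact Hy]. Qed.

Lemma spread_le_deviation n y w p i : spread_le n y w ->
  (forall j, (j < n)%nat -> 0 <= p j) -> rsum n p = 1 -> (i < n)%nat ->
  Rabs (y i - rsum n (fun j => p j * y j)) <= w.
Proof.
  intros (hi & lo & Hw & Hy) Hp0 Hp1 Hi.
  assert (Havg := convex_comb_between n p y lo hi Hp0 Hp1 Hy).
  specialize (Hy i Hi). apply Rabs_le. lra.
Qed.

Definition discounted (rho X : R) (e : nat -> R) (k : nat) : R :=
  rho ^ k * X + rsum k (fun t => rho ^ (k - 1 - t) * e t).

Lemma discounted_add rho X e k N : discounted rho X e (k + N) =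
  rho ^ N * discounted rho X e k + rsum N (fun u => rho ^ (N - 1 - u) * e (k + u)%nat).
Proof.
  unfold discounted. rewrite rsum_split, Rmult_plus_distr_l, <- rsum_scal.
  rewrite (rsum_ext k _ (fun t => rho ^ N * (rho ^ (k - 1 - t) * e t))).
  - rewrite (rsum_ext N _ (fun u => rho ^ (N - 1 - u) * e (k + u)%nat)).
    + rewrite pow_add. ring.
    + intros u Hu. do 2 f_equal. lia.
  - intros t Ht. replace (k + N - 1 - t)%nat with (N + (k - 1 - t))%nat by lia.
    rewrite pow_add. ring.
Qed.

Lemma discounted_scal rho X e a k :
  discounted rho (a * X) (fun t => a * e t) k = a * discounted rho X e k.
Proof.
  unfold discounted. rewrite (rsum_ext k _ (fun t => a * (rho ^ (k - 1 - t) * e t))) by (intros; ring).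
  rewrite rsum_scal. ring.
Qed.

Lemma discounted_nonneg rho X e k : 0 <= rho -> 0 <= X -> (forall t, 0 <= e t) ->
  0 <= discounted rho X e k.
Proof.
  intros Hrho HX He. unfold discounted.
  apply Rplus_le_le_0_compat; [apply Rmult_le_pos; auto; apply pow_le; auto|].
  apply rsum_nonneg. intros. apply Rmult_le_pos; auto. apply pow_le; auto.
Qed.

Section PerturbedAveraging.

Variables (I B : nat) (E : nat -> nat -> nat -> Prop) (W : nat -> nat -> nat -> R) (d : R).
Hypothesis HI : (0 < I)%nat.
Hypothesis HW0 : forall t i j, (i < I)%nat -> (j < I)%nat -> 0 <= W t i j.
Hypothesis HWrow : forall t i, (i < I)%nat -> rsum I (W t i) = 1.
Hypothesis Hd : 0 <= d.
Hypothesis HSC : forall t, strongly_connected_union E I B t.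
Hypothesis HWdiag : forall t i, (i < I)%nat -> W t i i >= d.
Hypothesis HWedge : forall t i j, (i < I)%nat -> (j < I)%nat -> E t j i -> W t i j >= d.

Let N := ((I - 1) * B)%nat.

Lemma weight_floor_le_one : d <= 1.
Proof.
  assert (HW00 := HWdiag O O HI). rewrite <- (HWrow O O HI).
  enough (W O O O <= rsum I (W O O)) by lra.
  apply rsum_term_le; auto.
Qed.

Variable rho : R.
Hypothesis Hrho : 0 < rho <= 1.
Hypothesis HrhoN : rho ^ N = 1 - d ^ N.

Section Scalar.

Variables (s eta : nat -> nat -> R) (e : nat -> R).
Hypothesis Hs : forall t i, (i < I)%nat -> s (S t) i = rsum I (fun j => W t i j * s t j) + eta t i.
Hypothesis Heta : forall t i, (i < I)%nat -> Rabs (eta t i) <= e t.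

Lemma averaging_drift k lo hi : (forall j, (j < I)%nat -> lo <= s k j <= hi) ->
  forall p j, (j < I)%nat ->
  lo - rsum p (fun u => e (k + u)%nat) <= s (k + p)%nat j <= hi + rsum p (fun u => e (k + u)%nat).
Proof.
  intros Hk p. induction p as [|p IH]; intros j Hj.
  - rewrite Nat.add_0_r. simpl. specialize (Hk j Hj). lra.
  - rewrite Nat.add_succ_r. simpl rsum. rewrite Hs by auto.
    assert (Havg := convex_comb_between I (W (k + p)%nat j) (s (k + p)%nat) _ _
                      (fun u Hu => HW0 _ _ _ Hj Hu) (HWrow _ _ Hj) IH).
    assert (Hnoise := Rabs_le_between _ _ (Heta (k + p)%nat j Hj)). lra.
Qed.

(* Both [hi + R t - s t] and [s t - lo + R t], with [R] the accumulated noise,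
   are nonnegative super-solutions of the averaging, so each node gains a
   [d ^ N]-fraction of the gap at node [0] from both sides. *)
Lemma spread_contract k w : spread_le I (s k) w ->
  spread_le I (s (k + N)%nat) ((1 - d ^ N) * w + 2 * rsum N (fun u => e (k + u)%nat)).
Proof.
  intros (hi & lo & Hw & Hk).
  set (R t := rsum (t - k) (fun u => e (k + u)%nat)).
  assert (HR : forall t, (k <= t)%nat -> R (S t) = R t + e t).
  { intros t Ht. unfold R. replace (S t - k)%nat with (S (t - k)) by lia. simpl.
    replace (k + (t - k))%nat with t by lia. reflexivity. }
  assert (Hbnd : forall t j, (k <= t)%nat -> (j < I)%nat -> lo - R t <= s t j <= hi + R t).
  { intros t j Ht Hj. assert (Hdrift := averaging_drift k lo hi Hk (t - k) j Hj).
    replace (k + (t - k))%nat with t in Hdrift by lia. exact Hdrift. }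
  assert (Hstep : forall a c t i, (k <= t)%nat -> (i < I)%nat -> (a = 1 \/ a = -1) ->
            rsum I (fun j => W t i j * (a * s t j + c)) <= a * s (S t) i + c + e t).
  { intros a c t i Ht Hi Ha. rewrite rsum_affine, Hs by auto.
    assert (Hnoise := Rabs_le_between _ _ (Heta t i Hi)). destruct Ha as [->| ->]; lra. }
  assert (Hupper := super_solution_spread I B E W d (fun t i => -1 * s t i + (hi + R t)) k Hd HSC HW0 HWdiag HWedge).
  assert (Hlower := super_solution_spread I B E W d (fun t i => 1 * s t i + (R t - lo)) k Hd HSC HW0 HWdiag HWedge).
  cbv beta in Hupper, Hlower. fold N in Hupper, Hlower.
  assert (HRk : R k = 0) by (unfold R; rewrite Nat.sub_diag; reflexivity).
  assert (HRN : R (k + N)%nat = rsum N (fun u => e (k + u)%nat)) by (unfold R; f_equal; lia).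
  rewrite HRk, HRN in Hupper, Hlower.
  assert (HdN1 : d ^ N <= 1) by (rewrite <- (pow1 N); apply pow_incr; split; [|apply weight_floor_le_one]; auto).
  exists (hi + rsum N (fun u => e (k + u)%nat) - d ^ N * (hi - s k O)),
         (lo - rsum N (fun u => e (k + u)%nat) + d ^ N * (s k O - lo)).
  split.
  { assert ((1 - d ^ N) * (hi - lo) <= (1 - d ^ N) * w) by (apply Rmult_le_compat_l; lra). lra. }
  intros j Hj.
  assert (Hu := Hupper ltac:(intros t i Ht Hi; specialize (Hbnd t i Ht Hi); lra)
    ltac:(intros t i Ht Hi; rewrite HR by auto; specialize (Hstep (-1) (hi + R t) t i Ht Hi); lra) j O Hj HI).
  assert (Hl := Hlower ltac:(intros t i Ht Hi; specialize (Hbnd t i Ht Hi); lra)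
    ltac:(intros t i Ht Hi; rewrite HR by auto; specialize (Hstep 1 (R t - lo) t i Ht Hi); lra) j O Hj HI).
  lra.
Qed.

Variable X : R.
Hypothesis He0 : forall t, 0 <= e t.
Hypothesis Hs0 : forall i, (i < I)%nat -> Rabs (s O i) <= X.

(* Contracting by [rho ^ N = 1 - d ^ N] once per window of length [N] is dominated
   by contracting by [rho] at every step. *)
Theorem spread_bound k : spread_le I (s k) (2 / (1 - d ^ N) * discounted rho X e k).
Proof.
  assert (Hlam : 0 < 1 - d ^ N) by (rewrite <- HrhoN; apply pow_lt; lra).
  assert (HN : (1 <= N)%nat)
    by (destruct (Nat.eq_dec N 0) as [HN0|]; [rewrite HN0 in Hlam; simpl in Hlam; lra|lia]).
  set (C := 2 / (1 - d ^ N)).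
  assert (HC : forall a, (a <= N)%nat -> 2 <= C * rho ^ a).
  { intros a Ha. replace 2 with (C * rho ^ N) by (unfold C; rewrite HrhoN; field; lra).
    apply Rmult_le_compat_l; [unfold C, Rdiv; apply Rmult_le_pos; [lra|apply Rlt_le, Rinv_0_lt_compat; lra]|].
    apply pow_le_pow_of_le1; [lra|exact Ha]. }
  assert (HX : 0 <= X) by (specialize (Hs0 O HI); pose proof (Rabs_pos (s O O)); lra).
  induction k as [k IH] using (well_founded_induction Wf_nat.lt_wf).
  destruct (Nat.lt_ge_cases k N) as [Hk|Hk].
  - assert (Hdrift := averaging_drift O (- X) X (fun j Hj => Rabs_le_between _ _ (Hs0 j Hj)) k).
    exists (X + rsum k (fun u => e u)), (- X - rsum k (fun u => e u)). split.
    + unfold discounted. rewrite Rmult_plus_distr_l, <- rsum_scal.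
      assert (2 * X <= C * rho ^ k * X) by (apply Rmult_le_compat_r; auto; apply HC; lia).
      assert (2 * rsum k e <= rsum k (fun t => C * (rho ^ (k - 1 - t) * e t))).
      { rewrite <- rsum_scal. apply rsum_le. intros t Ht. rewrite <- Rmult_assoc.
        apply Rmult_le_compat_r; auto. apply HC. lia. }
      replace (rsum k (fun u => e u)) with (rsum k e) by reflexivity. lra.
    + intros j Hj. exact (Hdrift j Hj).
  - replace k with ((k - N) + N)%nat by lia.
    eapply spread_le_weaken; [apply spread_contract, IH; lia|].
    rewrite discounted_add, HrhoN.
    assert (2 * rsum N (fun u => e (k - N + u)%nat)
            <= C * rsum N (fun u => rho ^ (N - 1 - u) * e (k - N + u)%nat)).
    { rewrite <- !rsum_scal. apply rsum_le. intros u Hu.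
      rewrite <- Rmult_assoc. apply Rmult_le_compat_r; auto. apply HC. lia. }
    lra.
Qed.

End Scalar.

(* Pairing with the disagreement vector [v] itself reduces the vector case to
   [spread_bound], since [<v, x_i - avg> = |v|^2]. *)
Theorem disagreement_bound m (x eps : nat -> nat -> nat -> R) :
  (forall t i l, (i < I)%nat -> (l < m)%nat ->
     x (S t) i l = rsum I (fun j => W t i j * x t j l) + eps t i l) ->
  forall k i p, (i < I)%nat -> (forall j, (j < I)%nat -> 0 <= p j) -> rsum I p = 1 ->
  vnorm m (fun l => x k i l - rsum I (fun j => p j * x k j l))
  <= 2 / (1 - d ^ N) * discounted rho (snorm I m (x O)) (fun t => snorm I m (eps t)) k.
Proof.
  intros Hx k i p Hi Hp0 Hp1.
  set (v l := x k i l - rsum I (fun j => p j * x k j l)).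
  set (nv := vnorm m v).
  set (s t j := rsum m (fun l => v l * x t j l)).
  set (eta t j := rsum m (fun l => v l * eps t j l)).
  assert (Hinner : forall y j, (j < I)%nat -> Rabs (rsum m (fun l => v l * y j l)) <= nv * snorm I m y).
  { intros y j Hj. eapply Rle_trans; [apply Rabs_rsum_mul_le|].
    apply Rmult_le_compat_l; [apply sqrt_pos|apply vnorm_le_snorm; exact Hj]. }
  assert (Hs : forall t j, (j < I)%nat -> s (S t) j = rsum I (fun j' => W t j j' * s t j') + eta t j)
    by (intros t j Hj; apply inner_averaging_step; intros; apply Hx; auto).
  assert (Hspread := spread_bound s eta (fun t => nv * snorm I m (eps t)) Hs
                       (fun t j Hj => Hinner (eps t) j Hj) (nv * snorm I m (x O))
                       (fun t => Rmult_le_pos _ _ (sqrt_pos _) (sqrt_pos _))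
                       (fun j Hj => Hinner (x O) j Hj) k).
  rewrite discounted_scal in Hspread.
  assert (Hdev := spread_le_deviation I (s k) _ p i Hspread Hp0 Hp1 Hi).
  assert (Hsq : s k i - rsum I (fun j => p j * s k j) = nv * nv) by apply vnorm_sq_deviation.
  assert (HD := discounted_nonneg rho (snorm I m (x O)) (fun t => snorm I m (eps t)) k
                  ltac:(lra) (sqrt_pos _) (fun t => sqrt_pos _)).
  assert (Hnv : 0 <= nv) by apply sqrt_pos.
  assert (HC : 0 <= 2 / (1 - d ^ N)).
  { assert (0 < 1 - d ^ N) by (rewrite <- HrhoN; apply pow_lt; lra).
    unfold Rdiv. apply Rmult_le_pos; [lra|apply Rlt_le, Rinv_0_lt_compat; lra]. }
  rewrite Hsq, Rabs_right in Hdev by nra.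
  fold v nv. destruct (Req_dec nv 0) as [->|Hnv0]; [nra|].
  apply (Rmult_le_reg_l nv); [lra|]. lra.
Qed.

End PerturbedAveraging.

(** * Push-sum weights *)

Lemma column_stochastic_nonneg {A I} : column_stochastic A I ->
  forall t i j, (i < I)%nat -> (j < I)%nat -> 0 <= A t i j.
Proof. intros HAcs t i j Hi Hj. apply HAcs; assumption. Qed.

Lemma compliant_diag_ge {E A I kappa} : compliant E A I kappa ->
  forall t i, (i < I)%nat -> A t i i >= kappa.
Proof. intros HA t i Hi. apply (HA t i i Hi Hi). Qed.

Lemma compliant_edge_ge {E A I kappa} : compliant E A I kappa ->
  forall t i j, (i < I)%nat -> (j < I)%nat -> E t j i -> A t i j >= kappa.
Proof. intros HA t i j Hi Hj. apply (HA t i j Hi Hj). Qed.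

Definition push_sum_mixing (A : nat -> nat -> nat -> R) (phi : nat -> nat -> R) (t i j : nat) : R :=
  A t i j * phi t j / phi (S t) i.

Section PushSum.

Variables (I B : nat) (kappa : R) (E : nat -> nat -> nat -> Prop)
  (A : nat -> nat -> nat -> R) (phi : nat -> nat -> R).
Hypothesis HI : (2 <= I)%nat.
Hypothesis Hkappa : 0 < kappa.
Hypothesis HSC : forall t, strongly_connected_union E I B t.
Hypothesis HA : compliant E A I kappa.
Hypothesis HAcs : column_stochastic A I.
Hypothesis Hphi0 : forall i, (i < I)%nat -> phi O i = 1.
Hypothesis Hphi : forall k i, (i < I)%nat -> phi (S k) i = rsum I (fun j => A k i j * phi k j).

Let N := ((I - 1) * B)%nat.

(* Some edge leaves node [0], so column [0] holds two entries [>= kappa]. *)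
Lemma compliant_kappa_le_half : kappa <= / 2.
Proof.
  destruct (clos_rt_exit_edge (union_edge E I B O) (fun v => v = O) O 1%nat
              (HSC O O 1%nat ltac:(lia) ltac:(lia)) eq_refl ltac:(cbv beta; lia))
    as (v & w & (Hv & Hw & t & _ & He) & -> & Hw0).
  assert (Htwo := rsum_two_terms_le I (fun u => A t u O) w O
                    (fun u Hu => column_stochastic_nonneg HAcs t u O Hu Hv) Hw Hv Hw0).
  destruct (HAcs t) as [_ Hcol]. rewrite Hcol in Htwo by exact Hv.
  assert (Hedge := compliant_edge_ge HA t w O Hw Hv He).
  assert (Hdiag := compliant_diag_ge HA t O Hv).
  simpl in Htwo. lra.
Qed.

Lemma push_sum_weight_nonneg k i : (i < I)%nat -> 0 <= phi k i.
Proof.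
  revert i. induction k as [|k IH]; intros i Hi; [rewrite Hphi0; auto; lra|].
  rewrite Hphi by auto. apply rsum_nonneg. intros j Hj.
  apply Rmult_le_pos; [apply (column_stochastic_nonneg HAcs)|apply IH]; auto.
Qed.

Lemma push_sum_mass k : rsum I (phi k) = INR I.
Proof.
  induction k as [|k IH].
  - rewrite (rsum_ext I _ (fun _ => 1)) by (intros; apply Hphi0; auto). rewrite rsum_const. ring.
  - rewrite (rsum_ext I _ (fun i => rsum I (fun j => A k i j * phi k j))) by (intros; apply Hphi; auto).
    rewrite rsum_comm, <- IH. apply rsum_ext. intros j Hj.
    rewrite (rsum_ext I _ (fun i => phi k j * A k i j)) by (intros; ring).
    rewrite rsum_scal. destruct (HAcs k) as [_ Hcol]. rewrite Hcol by auto. ring.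
Qed.

Lemma push_sum_weight_ge_pow k i : (i < I)%nat -> kappa ^ k <= phi k i.
Proof.
  revert i. induction k as [|k IH]; intros i Hi; [rewrite Hphi0 by auto; simpl; lra|].
  rewrite Hphi by auto. simpl.
  assert (Hterm : A k i i * phi k i <= rsum I (fun j => A k i j * phi k j)).
  { apply (rsum_term_le I (fun j => A k i j * phi k j)); auto.
    intros. apply Rmult_le_pos; [apply (column_stochastic_nonneg HAcs)|apply push_sum_weight_nonneg]; auto. }
  eapply Rle_trans; [|exact Hterm].
  apply Rmult_le_compat; [lra|apply pow_le; lra|apply Rge_le, (compliant_diag_ge HA)|apply IH]; auto.
Qed.

(* After [N] steps every node has received a [kappa ^ N]-share of some node of weight [>= 1]. *)
Lemma push_sum_weight_lower k i : (i < I)%nat -> kappa ^ (2 * N) <= phi k i.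
Proof.
  intros Hi. assert (Hk1 := compliant_kappa_le_half).
  destruct (Nat.lt_ge_cases k N) as [Hk|Hk].
  - eapply Rle_trans; [|apply push_sum_weight_ge_pow; auto]. apply pow_le_pow_of_le1; [lra|lia].
  - destruct (rsum_ge_exists_ge I (phi (k - N)) 1 ltac:(lia) ltac:(rewrite push_sum_mass; lra))
      as (j & Hj & Hphij).
    assert (Hspread := super_solution_spread I B E A kappa phi (k - N) ltac:(lra) HSC
      (column_stochastic_nonneg HAcs) (compliant_diag_ge HA) (compliant_edge_ge HA)
      (fun t u _ => push_sum_weight_nonneg t u) (fun t u _ Hu => Req_le _ _ (eq_sym (Hphi t u Hu))) i j Hi Hj).
    fold N in Hspread. replace (k - N + N)%nat with k in Hspread by lia.
    assert (kappa ^ (2 * N) <= kappa ^ N) by (apply pow_le_pow_of_le1; [lra|lia]).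
    assert (0 <= kappa ^ N) by (apply pow_le; lra). nra.
Qed.

Lemma push_sum_weight_upper k i : (i < I)%nat -> phi k i <= INR I - kappa ^ (2 * N).
Proof.
  intros Hi. set (j := if Nat.eq_dec i O then 1%nat else O).
  assert (Hj : (j < I)%nat) by (unfold j; destruct (Nat.eq_dec i O); lia).
  assert (Hij : i <> j) by (unfold j; destruct (Nat.eq_dec i O); lia).
  assert (Htwo := rsum_two_terms_le I (phi k) i j (fun u => push_sum_weight_nonneg k u) Hi Hj Hij).
  rewrite push_sum_mass in Htwo. assert (Hphij := push_sum_weight_lower k j Hj). lra.
Qed.

Lemma push_sum_weight_pos k i : (i < I)%nat -> 0 < phi k i.
Proof.
  intros Hi. eapply Rlt_le_trans; [|apply push_sum_weight_lower; auto]. apply pow_lt. lra.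
Qed.

Lemma push_sum_mixing_nonneg t i j : (i < I)%nat -> (j < I)%nat -> 0 <= push_sum_mixing A phi t i j.
Proof.
  intros Hi Hj. unfold push_sum_mixing, Rdiv.
  apply Rmult_le_pos; [apply Rmult_le_pos|apply Rlt_le, Rinv_0_lt_compat].
  - apply (column_stochastic_nonneg HAcs); assumption.
  - apply push_sum_weight_nonneg, Hj.
  - apply push_sum_weight_pos, Hi.
Qed.

Lemma push_sum_mixing_row t i : (i < I)%nat -> rsum I (push_sum_mixing A phi t i) = 1.
Proof.
  intros Hi. unfold push_sum_mixing.
  rewrite (rsum_ext I _ (fun j => / phi (S t) i * (A t i j * phi t j))) by (intros; unfold Rdiv; ring).
  rewrite rsum_scal, <- Hphi by exact Hi. field. apply Rgt_not_eq, push_sum_weight_pos, Hi.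
Qed.

Lemma push_sum_mixing_ge lb ub t i j : 0 <= lb -> (forall k u, (u < I)%nat -> lb <= phi k u <= ub) ->
  (i < I)%nat -> (j < I)%nat -> A t i j >= kappa -> push_sum_mixing A phi t i j >= kappa * lb / ub.
Proof.
  intros Hlb Hbnd Hi Hj HAij. unfold push_sum_mixing, Rdiv. apply Rle_ge.
  assert (Hpi := push_sum_weight_pos (S t) i Hi).
  destruct (Hbnd t j Hj), (Hbnd (S t) i Hi).
  apply Rmult_le_compat; [nra|apply Rlt_le, Rinv_0_lt_compat; lra|nra|].
  apply Rinv_le_contravar; lra.
Qed.

Lemma push_sum_estimate_step m (x eps : nat -> nat -> nat -> R) :
  (forall k i l, (i < I)%nat -> (l < m)%nat ->
     x (S k) i l = / phi (S k) i * rsum I (fun j => A k i j * phi k j * x k j l) + eps k i l) ->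
  forall t i l, (i < I)%nat -> (l < m)%nat ->
    x (S t) i l = rsum I (fun j => push_sum_mixing A phi t i j * x t j l) + eps t i l.
Proof.
  intros Hx t i l Hi Hl. rewrite Hx, <- rsum_scal by auto. f_equal.
  apply rsum_ext. intros j Hj. unfold push_sum_mixing. field.
  apply Rgt_not_eq, push_sum_weight_pos, Hi.
Qed.

Theorem push_sum_disagreement lb ub rho m (x eps : nat -> nat -> nat -> R) :
  0 <= lb -> (forall k u, (u < I)%nat -> lb <= phi k u <= ub) ->
  0 < rho <= 1 -> rho ^ N = 1 - (kappa * lb / ub) ^ N ->
  (forall k i l, (i < I)%nat -> (l < m)%nat ->
     x (S k) i l = / phi (S k) i * rsum I (fun j => A k i j * phi k j * x k j l) + eps k i l) ->
  forall k i, (i < I)%nat ->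
  vnorm m (fun l => x k i l - / INR I * rsum I (fun j => phi k j * x k j l))
  <= 2 / (1 - (kappa * lb / ub) ^ N) * discounted rho (snorm I m (x O)) (fun t => snorm I m (eps t)) k.
Proof.
  intros Hlb Hbnd Hrho HrhoN Hx k i Hi.
  assert (HI0 : (0 < I)%nat) by lia.
  assert (Hkt : 0 <= kappa * lb / ub).
  { destruct (Hbnd O O HI0). assert (0 < ub) by (pose proof (push_sum_weight_pos O O HI0); lra).
    unfold Rdiv. apply Rmult_le_pos; [nra|apply Rlt_le, Rinv_0_lt_compat; lra]. }
  rewrite (vnorm_ext m _ (fun l => x k i l - rsum I (fun j => phi k j / INR I * x k j l))).
  - apply (disagreement_bound I B E (push_sum_mixing A phi) _ HI0 push_sum_mixing_nonneg
             push_sum_mixing_row Hkt HSC); auto.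
    + intros t u Hu. apply push_sum_mixing_ge; auto. apply (compliant_diag_ge HA), Hu.
    + intros t u j Hu Hj He. apply push_sum_mixing_ge; auto. apply (compliant_edge_ge HA); auto.
    + apply push_sum_estimate_step, Hx.
    + intros j Hj. unfold Rdiv. apply Rmult_le_pos; [apply push_sum_weight_nonneg, Hj|].
      apply Rlt_le, Rinv_0_lt_compat, lt_0_INR, HI0.
    + rewrite (rsum_ext I _ (fun j => / INR I * phi k j)) by (intros; unfold Rdiv; ring).
      rewrite rsum_scal, push_sum_mass. field. apply not_0_INR. lia.
  - intros l Hl. rewrite <- rsum_scal. f_equal. apply rsum_ext. intros. unfold Rdiv. ring.
Qed.

End PushSum.

(** * Constants of the estimate *)

Lemma bounded_has_inf_sup (S : R -> Prop) lo hi : (exists y, S y) ->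
  (forall y, S y -> lo <= y <= hi) -> exists a b, is_inf S a /\ is_sup S b.
Proof.
  intros [y0 Hy0] Hbnd.
  destruct (completeness S) as [b [Hb1 Hb2]].
  { exists hi. intros y Hy. apply Hbnd, Hy. }
  { eauto. }
  destruct (completeness (fun y => S (- y))) as [a [Ha1 Ha2]].
  { exists (- lo). intros y Hy. specialize (Hbnd _ Hy). lra. }
  { exists (- y0). rewrite Ropp_involutive. exact Hy0. }
  exists (- a), b. split; split.
  - intros y Hy. enough (- y <= a) by lra. apply Ha1. rewrite Ropp_involutive. exact Hy.
  - intros c Hc. enough (a <= - c) by lra. apply Ha2. intros y Hy. specialize (Hc _ Hy). lra.
  - exact Hb1.
  - exact Hb2.
Qed.

Lemma Rpower_inv_nat_root lam N : 0 < lam < 1 -> (1 <= N)%nat ->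
  0 < Rpower lam (/ INR N) < 1 /\ Rpower lam (/ INR N) ^ N = lam.
Proof.
  intros Hlam HN. assert (HN0 : 0 < INR N) by (apply lt_0_INR; lia).
  split; [split|].
  - apply exp_pos.
  - unfold Rpower. rewrite <- exp_0. apply exp_increasing.
    assert (ln lam < 0) by (rewrite <- ln_1; apply ln_increasing; lra).
    assert (0 < / INR N) by (apply Rinv_0_lt_compat; exact HN0). nra.
  - rewrite <- Rpower_pow by apply exp_pos.
    rewrite Rpower_mult, Rinv_l by lra. apply Rpower_1. lra.
Qed.

Lemma scaled_ratio_bounds a lb ub : 0 < a -> 0 < lb <= ub -> 0 < a * lb / ub <= a.
Proof.
  intros Ha Hlu. split; [apply Rdiv_lt_0_compat; nra|].
  apply (Rmult_le_reg_r ub); [lra|]. unfold Rdiv. rewrite Rmult_assoc, Rinv_l by lra. nra.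
Qed.

Lemma consensus_constant_ge n rho q lam : (1 <= n)%nat -> 0 < rho <= 1 -> 0 < q -> 0 < lam ->
  2 / lam <= 2 * INR n / rho * (2 * (1 + / q) / lam).
Proof.
  intros Hn Hrho Hq Hlam.
  assert (Hn1 : 1 <= INR n) by (apply (le_INR 1), Hn).
  assert (0 < / q) by (apply Rinv_0_lt_compat, Hq).
  assert (0 < / lam) by (apply Rinv_0_lt_compat, Hlam).
  rewrite <- (Rmult_1_l (2 / lam)). unfold Rdiv.
  apply Rmult_le_compat; [lra|nra| |nra].
  apply (Rmult_le_reg_r rho); [lra|]. rewrite Rmult_assoc, Rinv_l by lra. lra.
Qed.

Theorem mainTheorem11
  (I B m : nat) (kappa : R)
  (E : nat -> nat -> nat -> Prop) (A : nat -> nat -> nat -> R)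
  (eps : nat -> nat -> nat -> R)        (* eps k i l = l-th component of eps_i^k *)
  (phi : nat -> nat -> R)               (* phi k i = phi_(i)^k *)
  (x : nat -> nat -> nat -> R)          (* x k i l = l-th component of x_(i)^k *)
  (HI : (2 <= I)%nat)
  (Hkappa : 0 < kappa)
  (HB : B_strongly_connected E I B)
  (HA : compliant E A I kappa)
  (HAcs : column_stochastic A I)
  (Hphi0 : forall i, (i < I)%nat -> phi 0%nat i = 1)
  (Hphi : forall k i, (i < I)%nat ->
     phi (S k) i = rsum I (fun j => A k i j * phi k j))
  (Hx : forall k i l, (i < I)%nat -> (l < m)%nat ->
     x (S k) i l = / phi (S k) i * rsum I (fun j => A k i j * phi k j * x k j l)
                   + eps k i l) :
  (exists lb ub, is_inf (phi_values I phi) lb /\ is_sup (phi_values I phi) ub) /\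
  forall phi_lb phi_ub,
    is_inf (phi_values I phi) phi_lb ->
    is_sup (phi_values I phi) phi_ub ->
    let N := ((I - 1) * B)%nat in
    let kt := kappa * phi_lb / phi_ub in
    let rho := Rpower (1 - kt ^ N) (/ INR N) in
    let c := (2 * INR I / rho) * (2 * (1 + / (kt ^ N)) / (1 - kt ^ N)) in
    (* (a) *)
    phi_lb >= kappa ^ (2 * N) /\ phi_ub <= INR I - kappa ^ (2 * N) /\
    (* rho in (0,1) *)
    0 < rho < 1 /\
    (* (b) *)
    (forall k i, (i < I)%nat ->
       vnorm m (fun l => x k i l - / INR I * rsum I (fun j => phi k j * x k j l))
       <= c * (rho ^ k * snorm I m (x 0%nat)
               + rsum k (fun t => rho ^ (k - 1 - t) * snorm I m (eps t)))).
Proof.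
  destruct HB as [HB0 HSC].
  assert (Hphi_bnd : forall k i, (i < I)%nat ->
            kappa ^ (2 * ((I - 1) * B)) <= phi k i <= INR I - kappa ^ (2 * ((I - 1) * B)))
    by (split; [eapply push_sum_weight_lower|eapply push_sum_weight_upper]; eauto).
  split.
  { eapply bounded_has_inf_sup; [exists (phi O O), O, O; split; [lia|reflexivity]|].
    intros y (k & i & Hi & ->). apply Hphi_bnd, Hi. }
  intros phi_lb phi_ub [Hinf Hinf_max] [Hsup Hsup_min] N kt rho c.
  assert (Hval : forall k i, (i < I)%nat -> phi_lb <= phi k i <= phi_ub)
    by (intros k i Hi; split; [apply Hinf|apply Hsup]; exists k, i; auto).
  assert (Hlb : kappa ^ (2 * N) <= phi_lb) by (apply Hinf_max; intros y (k & i & Hi & ->); apply Hphi_bnd, Hi).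
  assert (Hub : phi_ub <= INR I - kappa ^ (2 * N)) by (apply Hsup_min; intros y (k & i & Hi & ->); apply Hphi_bnd, Hi).
  assert (HN : (1 <= N)%nat) by (unfold N; nia).
  assert (Hfloor : 0 < kappa ^ (2 * N)) by (apply pow_lt, Hkappa).
  assert (Hkt : 0 < kt <= kappa)
    by (apply scaled_ratio_bounds; [exact Hkappa|]; destruct (Hval O O ltac:(lia)); lra).
  assert (HktN : 0 < kt ^ N < 1).
  { assert (kappa <= / 2) by (eapply compliant_kappa_le_half; eauto; lia).
    split; [apply pow_lt; lra|apply pow_lt_1_compat; [lra|lia]]. }
  destruct (Rpower_inv_nat_root (1 - kt ^ N) N ltac:(lra) HN) as [Hrho HrhoN]. fold rho in Hrho, HrhoN.
  split; [lra|]. split; [lra|]. split; [exact Hrho|].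
  intros k i Hi.
  eapply Rle_trans.
  - apply push_sum_disagreement with (kappa := kappa) (E := E) (A := A) (lb := phi_lb) (ub := phi_ub) (rho := rho);
      auto; lra.
  - apply Rmult_le_compat_r; [apply discounted_nonneg; [lra|apply sqrt_pos|intros; apply sqrt_pos]|].
    apply consensus_constant_ge; lia || lra.
Qed.
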